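(* Let $G$ be a finite simple undirected graph, and let $c:V(G)\to \mathbb{R}_{>0}$ and $\kappa:V(G)\to \mathbb{Z}$ be functions such that $0\leq \kappa(u)\leq d_G(u)$ for every vertex $u$ of $G$. Then $$\beta(G,c,\kappa) \leq \sum_{u\in V(G)} \frac{c(u)\big(d_G(u)-\kappa(u)\big)\big(d_G(u)-\kappa(u)+1\big)}{2(d_G(u)+1)}.$$
   Context: $d_G(u)$ denotes the degree of $u$ in $G$, and $[n]=\{1,\dots,n\}$. For a function $\lambda:V(G)\to\mathbb{Z}$, a set $I\subseteq V(G)$ is called $\lambda$-degenerate in $G$ if there is a linear ordering $u_1,\ldots,u_k$ of the vertices of $I$ such that for every $i\in[k]$, $u_i$ has at most $\lambda(u_i)$ neighbors in $\{u_j: j\in[i-1]\}$. Define $$\beta(G,c,\kappa)=\min\Big\{\sum_{u\in V(G)} c(u)\iota(u) : \iota:V(G)\to\mathbb{Z}_{\geq 0} \text{ and } V(G) \text{ is } (\kappa+\iota)\text{-degenerate in } G\Big\}.$$ *)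

From HB Require Import structures.
From mathcomp Require Import all_boot all_order all_algebra.
Set Implicit Arguments. Unset Strict Implicit. Unset Printing Implicit Defensive.
Import Order.TTheory GRing.Theory Num.Theory.
Local Open Scope ring_scope.

Definition simple_graph (T : finType) (e : rel T) : Prop :=
  symmetric e /\ irreflexive e.

Definition deg (T : finType) (e : rel T) (u : T) : nat := #|[set v | e u v]|.

Definition degenerate (T : finType) (e : rel T) (lam : T -> int) (I : {set T}) : Prop :=
  exists s : seq T, [/\ uniq s, s =i I &
    forall (s1 s2 : seq T) (u : T), s = s1 ++ u :: s2 ->
      ((#|[set v in s1 | e u v]|)%:Z <= lam u)%R].

Definition beta_feasible (T : finType) (e : rel T) (kappa : T -> int) (iota : T -> nat) : Prop :=
  degenerate e (fun u => kappa u + (iota u)%:Z) [set: T].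

Definition beta_cost (R : numDomainType) (T : finType) (c : T -> R) (iota : T -> nat) : R :=
  \sum_(u : T) c u * (iota u)%:R.

Definition is_beta (R : numDomainType) (T : finType) (e : rel T) (c : T -> R)
    (kappa : T -> int) (b : R) : Prop :=
  ((exists2 iota, beta_feasible e kappa iota & beta_cost c iota = b) /\
   (forall iota, beta_feasible e kappa iota -> b <= beta_cost c iota))%type.

From HB Require Import structures.
From mathcomp Require Import all_boot all_order all_algebra zify ring.
From Stdlib Require Import ClassicalEpsilon.
Set Implicit Arguments. Unset Strict Implicit. Unset Printing Implicit Defensive.
Import Order.TTheory GRing.Theory Num.Theory.
Local Open Scope ring_scope.

(* For S a set of vertices, write d_S(u) for the degree of u in G[S] and let
   B(S) = sum_{u in S} c(u) (d_S(u) - kappa(u)) (d_S(u) - kappa(u) + 1) / (2 (d_S(u) + 1)).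
   The summand is c(u) times the mean of (j - kappa(u))^+ over j in {0, ..., d_S(u)}:
   the expected cost of u in a uniformly random ordering of G[S].  Averaging over
   the choice of the last vertex v gives
   sum_{v in S} (c(v) (d_S(v) - kappa(v))^+ + B(S \ v)) = |S| B(S),
   so some v, placed after an inductively chosen ordering of S \ v, keeps the cost
   at most B(S).  The resulting ordering of V(G), with iota(u) the excess of the
   number of earlier neighbours of u over kappa(u), witnesses beta <= B(V(G)). *)

Lemma ex_minimizer (R : realDomainType) (X : finType) (P : X -> Prop) (f : X -> R) :
  (exists x, P x) -> exists2 x, P x & forall y, P y -> f x <= f y.
Proof.
move=> [x0 Px0].
pose Pb x : bool := if excluded_middle_informative (P x) then true else false.
have PbP x : reflect (P x) (Pb x).
  by rewrite /Pb; case: excluded_middle_informative => ?; constructor.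
have [x /PbP Px x_min] := arg_minP f (introT (PbP x0) Px0).
by exists x => // y /PbP; apply: x_min.
Qed.

Lemma degenerate_le (T : finType) (e : rel T) (lam lam' : T -> int) (I : {set T}) :
  (forall u, lam u <= lam' u \/ (deg e u)%:Z <= lam' u) ->
  degenerate e lam I -> degenerate e lam' I.
Proof.
move=> lam_le [s [s_uniq s_I s_deg]]; exists s; split => // s1 s2 u s_split.
have le_deg : (#|[set v in s1 | e u v]| <= deg e u)%N.
  by apply: subset_leq_card; apply/subsetP => v; rewrite !inE => /andP[].
have := s_deg _ _ _ s_split; case: (lam_le u); lia.
Qed.

(* Capping iota at the degree preserves feasibility and does not increase the cost,
   so the minimum can be taken over the finitely many iota bounded by #|T|. *)
Lemma beta_exists (R : realDomainType) (T : finType) (e : rel T) (c : T -> R)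
    (kappa : T -> int) :
  (forall u, 0 <= c u) -> (forall u, 0 <= kappa u) ->
  (exists iota, beta_feasible e kappa iota) -> exists b, is_beta e c kappa b.
Proof.
move=> c_ge0 kappa_ge0 [iota0 feas0].
pose bounded (g : {ffun T -> 'I_#|T|.+1}) u : nat := g u.
pose cap iota : {ffun T -> 'I_#|T|.+1} := [ffun u => inord (minn (iota u) (deg e u))].
have capE iota u : bounded (cap iota) u = minn (iota u) (deg e u).
  by rewrite /cap /bounded ffunE inordK // ltnS (leq_trans (geq_minr _ _)) ?max_card.
have cap_feasible iota :
    beta_feasible e kappa iota -> beta_feasible e kappa (bounded (cap iota)).
  apply: degenerate_le => u; rewrite capE; have := kappa_ge0 u.
  by case: (leqP (iota u) (deg e u)) => ?; [left | right]; lia.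
have [g g_feas g_min] := ex_minimizer (fun g => beta_cost c (bounded g))
  (ex_intro (fun g => beta_feasible e kappa (bounded g)) _ (cap_feasible _ feas0)).
exists (beta_cost c (bounded g)); split; first by exists (bounded g).
move=> iota feas; apply: le_trans (g_min _ (cap_feasible _ feas)) _.
by apply: ler_sum => u _; rewrite capE ler_wpM2l ?ler_nat ?geq_minl.
Qed.

Lemma exists_le_mean (R : realDomainType) (T : finType) (S : {set T}) (a : T -> R) (b : R) :
  S != set0 -> \sum_(u in S) a u = #|S|%:R * b -> exists2 u, u \in S & a u <= b.
Proof.
move=> /set0Pn [v vS] sum_a; apply/exists_inP; apply: contraT => /exists_inPn a_gt.
suff : #|S|%:R * b < \sum_(u in S) a u by rewrite sum_a ltxx.
rewrite mulr_natl -sumr_const; apply: ltr_sum => [|u uS].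
  by apply/hasP; exists v; rewrite ?mem_index_enum.
by rewrite ltNge a_gt.
Qed.

Section AverageExcess.
Variable R : numFieldType.

Definition avg_excess (d k : nat) : R := ((d - k) * (d - k).+1)%N%:R / (2 * d.+1%:R).

Lemma avg_excess_rec d k :
  d.+1%:R * avg_excess d k = d%:R * avg_excess d.-1 k + (d - k)%N%:R.
Proof.
rewrite /avg_excess; case: d => [|d].
  by rewrite sub0n mul0n !(mul0r, mulr0, mul1r, add0r).
have -> : ((d.+1 - k) * (d.+1 - k).+1 = (d - k) * (d - k).+1 + 2 * (d.+1 - k))%N.
  by case: (leqP k d) => ?; nia.
rewrite /= natrD natrM; field.
by rewrite -[1]/(1%:R) -!natrD !pnatr_eq0.
Qed.

Lemma avg_excess_int d k : (k <= d)%N ->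
  avg_excess d k = ((d%:Z - k%:Z) * (d%:Z - k%:Z + 1))%:~R / (2 * d.+1%:R).
Proof. by move=> le_kd; rewrite subzn // -PoszD -PoszM addn1. Qed.

End AverageExcess.

Lemma sumr_indicator (R : pzSemiRingType) (T : finType) (A : {pred T}) (b : pred T) :
  \sum_(v in A) (b v)%:R = #|[pred v in A | b v]|%:R :> R.
Proof. by rewrite -sumr_const big_mkcondr; apply: eq_bigr => v _; case: (b v). Qed.

Section LastVertexAveraging.
Variables (R : realFieldType) (T : finType) (e : rel T).
Hypothesis e_irr : irreflexive e.
Variables (c : T -> R) (k : T -> nat).

Definition deg_in (S : {set T}) u := #|[set v in S | e u v]|.

Definition excess_bound (S : {set T}) : R :=
  \sum_(u in S) c u * avg_excess R (deg_in S u) (k u).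

Lemma deg_inD1 (S : {set T}) (u v : T) :
  v \in S -> deg_in (S :\ v) u = (deg_in S u - e u v)%N.
Proof.
move=> vS; rewrite /deg_in (cardsD1 v [set w in S | e u w]) !inE vS /=.
have -> : [set w in S :\ v | e u w] = [set w in S | e u w] :\ v.
  by apply/setP => w; rewrite !inE andbA.
by case: (e u v); rewrite ?subn1 ?subn0.
Qed.

Lemma deg_inD1_self (S : {set T}) (u : T) : deg_in (S :\ u) u = deg_in S u.
Proof.
by apply: eq_card => v; rewrite !inE; case: eqP => [->|]; rewrite ?e_irr ?andbF.
Qed.

Lemma sum_avg_excess_delete (S : {set T}) (u : T) : u \in S ->
  (deg_in S u - k u)%N%:R + \sum_(v in S :\ u) avg_excess R (deg_in (S :\ v) u) (k u)
  = #|S|%:R * avg_excess R (deg_in S u) (k u).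
Proof.
move=> uS; set d := deg_in S u; set F := avg_excess R.
have term v : v \in S :\ u ->
    F (deg_in (S :\ v) u) (k u) = F d (k u) - (F d (k u) - F d.-1 (k u)) * (e u v)%:R.
  move=> /setD1P[_ vS]; rewrite deg_inD1 // -/d.
  by case: (e u v); rewrite ?subn1 ?subn0 (mulr1, mulr0) ?subKr ?subr0.
have nbrs : #|[pred v in S :\ u | e u v]| = d.
  by rewrite /d -(deg_inD1_self S u); apply: eq_card => v; rewrite !inE.
rewrite (eq_bigr _ term) sumrB sumr_const -mulr_sumr sumr_indicator nbrs.
have -> : (d - k u)%N%:R = d.+1%:R * F d (k u) - d%:R * F d.-1 (k u).
  by rewrite avg_excess_rec addrC addKr.
by rewrite (cardsD1 u S) uS /= -!natr1 -mulr_natl; ring.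
Qed.

Lemma sum_last_vertex (S : {set T}) :
  \sum_(v in S) (c v * (deg_in S v - k v)%N%:R + excess_bound (S :\ v))
  = #|S|%:R * excess_bound S.
Proof.
rewrite big_split /= /excess_bound mulr_sumr.
rewrite (exchange_big_dep (mem S)) /=; last by move=> v u _ /setD1P[].
rewrite -big_split; apply: eq_bigr => u uS.
rewrite (eq_bigl (fun v => v \in S :\ u)); last first.
  by move=> v; rewrite !inE uS andbT eq_sym andbC.
by rewrite /= -mulr_sumr -mulrDr sum_avg_excess_delete // mulrCA.
Qed.

Definition earlier_nbrs (s : seq T) u := #|[set v in take (index u s) s | e u v]|.

Lemma earlier_nbrs_rcons s u v : u \in s -> earlier_nbrs (rcons s v) u = earlier_nbrs s u.
Proof. by move=> us; rewrite /earlier_nbrs -cats1 index_cat us takel_cat // index_size. Qed.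

Lemma earlier_nbrs_rcons_last s v :
  v \notin s -> earlier_nbrs (rcons s v) v = #|[set w in s | e v w]|.
Proof.
move=> /negbTE vNs.
by rewrite /earlier_nbrs -cats1 index_cat vNs /= eqxx addn0 take_size_cat.
Qed.

Lemma exists_ordering (S : {set T}) : exists s : seq T, [/\ uniq s, s =i S &
  \sum_(u in S) c u * (earlier_nbrs s u - k u)%N%:R <= excess_bound S].
Proof.
have [n] := ubnP #|S|; elim: n S => // n IH S S_lt.
have [-> | S_n0] := eqVneq S set0.
  by exists [::]; split=> [||]; rewrite /excess_bound ?big_set0 // => x; rewrite inE.
have [v vS v_le] := exists_le_mean S_n0 (sum_last_vertex S).
have [|s [s_uniq s_S s_le]] := IH (S :\ v); first by rewrite (cardsD1 v S) vS in S_lt.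
have vNs : v \notin s by rewrite s_S !inE eqxx.
exists (rcons s v); split.
- by rewrite rcons_uniq vNs.
- by move=> x; rewrite mem_rcons inE s_S !inE; case: eqP => // ->.
apply: le_trans v_le; rewrite (bigD1 v) //=; apply: lerD.
  rewrite earlier_nbrs_rcons_last // (_ : #|_| = deg_in S v) // -deg_inD1_self.
  by apply: eq_card => w; rewrite !inE s_S !inE.
apply: le_trans s_le; rewrite (eq_bigl (fun u => u \in S :\ v)) => [|u]; last first.
  by rewrite !inE andbC.
by apply: ler_sum => u; rewrite -s_S => us; rewrite earlier_nbrs_rcons.
Qed.

Lemma exists_feasible_le_excess_bound (kappa : T -> int) :
  (forall u, kappa u = (k u)%:Z) ->
  exists2 iota, beta_feasible e kappa iota & beta_cost c iota <= excess_bound [set: T].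
Proof.
move=> kappaE; have [s [s_uniq s_T s_le]] := exists_ordering [set: T].
exists (fun u => earlier_nbrs s u - k u)%N.
  exists s; split=> // s1 s2 u s_split.
  have uNs1 : u \notin s1 by move: s_uniq; rewrite s_split cat_uniq /= => /and3P[_ /norP[]].
  by rewrite /earlier_nbrs s_split take_pivot // kappaE; lia.
by apply: le_trans s_le; rewrite (eq_bigl _ _ (@in_setT T)).
Qed.

Lemma deg_in_setT u : deg_in [set: T] u = deg e u.
Proof. by apply: eq_card => v; rewrite !inE. Qed.

End LastVertexAveraging.

Theorem theorem1 (R : realFieldType) (T : finType) (e : rel T)
    (c : T -> R) (kappa : T -> int) :
  simple_graph e ->
  (forall u, 0 < c u) ->
  (forall u, 0 <= kappa u /\ kappa u <= (deg e u)%:Z) ->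
  (exists b : R, is_beta e c kappa b) /\
  (forall b : R, is_beta e c kappa b ->
     b <= \sum_(u : T)
            c u * ((((deg e u)%:Z - kappa u) * ((deg e u)%:Z - kappa u + 1))%:~R)
              / (2 * ((deg e u).+1)%:R)).
Proof.
move=> [_ e_irr] c_gt0 kappa_bounds.
pose k u := `|kappa u|%N.
have kappaE u : kappa u = (k u)%:Z by rewrite /k gez0_abs //; case: (kappa_bounds u).
have [iota feas cost_le] := exists_feasible_le_excess_bound e_irr c kappaE.
split.
  apply: beta_exists => [u | u |]; [exact: ltW | by case: (kappa_bounds u) | by exists iota].
move=> b [_ b_min]; apply: le_trans (b_min _ feas) (le_trans cost_le _).
rewrite /excess_bound (eq_bigl _ _ (@in_setT T)); apply: ler_sum => u _.
have k_le_deg : (k u <= deg e u)%N by have [_] := kappa_bounds u; rewrite kappaE.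
by rewrite deg_in_setT avg_excess_int // kappaE mulrA.
Qed.
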